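(* Let $C\subset\mathbb{R}^n$ be a pointed, $n$-dimensional closed convex cone. If $K_j$ ($j\in\mathbb{N}$) and $K$ are $C$-pseudo-cones with $K_j\to K$, then $\gamma^n(K_j)\to\gamma^n(K)$.
   Context: $C^{\circ}=\{x:\langle x,y\rangle\le 0\ \forall y\in C\}$. A pseudo-cone is a nonempty closed convex set $K$ with $o\notin K$ and $\lambda K\subseteq K$ for $\lambda\ge1$; it is a $C$-pseudo-cone if its recession cone $\{z:K+z\subseteq K\}$ equals $C$. $\gamma^n$ is the standard Gaussian probability measure on $\mathbb{R}^n$. Fix a unit vector $\mathfrak{v}\in\operatorname{int}C\cap\operatorname{int}(-C^{\circ})$ and for $t>0$ let $C^-(t)=C\cap\{x:\langle x,\mathfrak v\rangle\le t\}$, $K^-(t)=K\cap C^-(t)$. A sequence of $C$-pseudo-cones $K_j$ converges to a $C$-pseudo-cone $K$ if there is $t_0>0$ with $K_j^-(t_0)\neq\emptyset$ for all $j$ and $K_j^-(t)\to K^-(t)$ in the Hausdorff metric for all $t\ge t_0$. *)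

From HB Require Import structures.
From mathcomp Require Import all_boot all_order all_algebra.
From mathcomp Require Import all_classical all_reals all_analysis.
Set Implicit Arguments. Unset Strict Implicit. Unset Printing Implicit Defensive.
Import Order.TTheory GRing.Theory Num.Theory.
Import numFieldNormedType.Exports.
Local Open Scope classical_set_scope.
Local Open Scope ring_scope.

Section Defs.
Variables (R : realType) (n : nat).
Local Notation vec := 'rV[R]_n.

Definition dotv (x y : vec) : R := \sum_(i < n) x ord0 i * y ord0 i.
Definition enorm (x : vec) : R := Num.sqrt (dotv x x).

Definition convex_set (A : set vec) : Prop :=
  forall x y, A x -> A y -> forall l : R, 0 <= l <= 1 -> A (l *: x + (1 - l) *: y).

Definition closed_convex_cone (C : set vec) : Prop :=
  [/\ C 0, closed C, convex_set C & forall x l, C x -> 0 <= l -> C (l *: x)].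

Definition pointed (C : set vec) : Prop := forall x, C x -> C (- x) -> x = 0.

(* dim C = n : C contains n linearly independent vectors *)
Definition full_dim (C : set vec) : Prop :=
  exists M : 'M[R]_n, (forall i, C (row i M)) /\ row_free M.

Definition polar (C : set vec) : set vec := [set x | forall y, C y -> dotv x y <= 0].

Definition pseudo_cone (K : set vec) : Prop :=
  [/\ K !=set0, closed K, convex_set K, ~ K 0 &
      forall x l, K x -> 1 <= l -> K (l *: x)].

Definition recession_cone (K : set vec) : set vec :=
  [set z | forall x, K x -> K (x + z)].

Definition C_pseudo_cone (C K : set vec) : Prop :=
  pseudo_cone K /\ recession_cone K = C.

Definition Cminus (C : set vec) (v : vec) (t : R) : set vec :=
  C `&` [set x | dotv x v <= t].

Definition Kminus (C K : set vec) (v : vec) (t : R) : set vec :=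
  K `&` Cminus C v t.

(* Hausdorff distance (Euclidean), +oo if no admissible radius exists *)
Definition hausdorff_dist (A B : set vec) : \bar R :=
  ereal_inf [set e%:E | e in [set e : R | 0 <= e /\
     (forall a, A a -> exists2 b, B b & enorm (a - b) <= e) /\
     (forall b, B b -> exists2 a, A a & enorm (a - b) <= e)]].

Definition hausdorff_cvg (Aj : nat -> set vec) (A : set vec) : Prop :=
  (fun j => hausdorff_dist (Aj j) A) @ \oo --> 0%E.

Definition pc_cvg (C : set vec) (v : vec) (Kj : nat -> set vec) (K : set vec) : Prop :=
  exists2 t0 : R, 0 < t0 &
    (forall j, Kminus C (Kj j) v t0 !=set0) /\
    (forall t, t0 <= t -> hausdorff_cvg (fun j => Kminus C (Kj j) v t) (Kminus C K v t)).

End Defs.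

(* standard Gaussian measure on R^n, as the n-fold product of the standard
   normal distribution, written as an iterated integral over coordinates *)
Fixpoint gauss_tuple (R : realType) (n : nat) : set (n.-tuple R) -> \bar R :=
  match n with
  | 0 => fun A => ((\1_A) [tuple]) %:E
  | m.+1 => fun A => (\int[normal_prob (0:R) 1]_x
                       gauss_tuple [set t : m.-tuple R | A [tuple of x :: t]])%E
  end.

Definition gaussian (R : realType) (n : nat) (A : set 'rV[R]_n) : \bar R :=
  gauss_tuple [set t : n.-tuple R | A (\row_i tnth t i)].

(* Let rho be the radius of a ball around v inside C.  For s > 0 the translates
   K + s v ⊆ K ⊆ K - s v of a C-pseudo-cone sandwich K, and as soon as the truncations
   K_j^-(t) and K^-(t) are Hausdorff-closer than s rho, they also sandwich K_j up to the
   half-space H_t = {x | <x, v> > t}.  So eventually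
     |γ(K_j) - γ(K)| <= γ((K - s v) \ (K + s v)) + γ(H_t).
   The last term is small for t large.  The first is small for s small, because these
   differences decrease to the boundary of the convex set K, which is Gaussian-null by
   Fubini over the first coordinate and induction on the dimension: at every abscissa
   strictly inside the projection of a convex set, the section of its boundary is the
   boundary of its section, and the two extreme abscissae are normal-null. *)

From Pilot Require Import Defs.
From HB Require Import structures.
From mathcomp Require Import all_boot all_order all_algebra.
From mathcomp Require Import all_classical all_reals all_analysis.
From mathcomp Require Import measurable_realfun ring lra.
Set Implicit Arguments. Unset Strict Implicit. Unset Printing Implicit Defensive.
Import Order.TTheory GRing.Theory Num.Theory Num.Def.
Import numFieldNormedType.Exports.
Local Open Scope classical_set_scope.
Local Open Scope ring_scope.

Section finite_measure_approximation.
Context d (T : measurableType d) (R : realType) (mu : {finite_measure set T -> \bar R}).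

Lemma fine_measure_le_setU (X Y Z : set T) :
  measurable X -> measurable Y -> measurable Z -> X `<=` Y `|` Z ->
  fine (mu X) <= fine (mu Y) + fine (mu Z).
Proof.
move=> mX mY mZ XYZ; rewrite -lee_fin EFinD !fineK ?fin_num_measure//.
apply: le_trans (measureU2 mu mY mZ).
by rewrite le_measure// inE//; exact: measurableU.
Qed.

Lemma measure_nonincreasing_small (F : (set T)^nat) :
  (forall k, measurable (F k)) -> (forall k, F k.+1 `<=` F k) ->
  mu (\bigcap_k F k) = 0%E -> forall e : R, 0 < e -> exists k, (mu (F k) < e%:E)%E.
Proof.
move=> mF dF F0 e e0.
have Fdecr : nonincreasing_seq F by apply/nonincreasing_seqP => k; exact/subsetPset.
have F0fin : (mu (F 0%N) < +oo)%E by rewrite -ge0_fin_numE// fin_num_measure.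
have : mu \o F @ \oo --> 0%E.
  rewrite -F0; exact: nonincreasing_cvg_mu F0fin mF (bigcapT_measurable mF) Fdecr.
move=> /(_ _ (nbhs_open_ereal_lt (f := fun=> e) e0)) [N _ hN].
by exists N; exact: (hN N (leqnn N)).
Qed.

Lemma measurable_set_gt (f : T -> R) (t : R) :
  measurable_fun setT f -> measurable [set x | t < f x].
Proof.
move=> mf; rewrite (_ : [set x | _] = setT `&` f @^-1` `]t, +oo[); first exact: mf.
by apply/seteqP; split => x /=; rewrite in_itv /= andbT // => -[].
Qed.

Lemma measure_tail_small (f : T -> R) : measurable_fun setT f ->
  forall e t0 : R, 0 < e -> exists2 t, t0 <= t & (mu [set x | (t < f x)%R] < e%:E)%E.
Proof.
move=> mf e t0 e0.
pose F k := [set x | t0 + k%:R < f x].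
have mF k : measurable (F k) by exact: measurable_set_gt.
have dF k : F k.+1 `<=` F k by move=> x; apply: le_lt_trans; rewrite lerD2l ler_nat.
have F0 : \bigcap_k F k = set0.
  apply/seteqP; split => // x /(_ (truncn `|f x - t0|).+1 I); rewrite /F /=.
  by have := truncnS_gt `|f x - t0|; have := ler_norm (f x - t0); lra.
have mu0 : mu (\bigcap_k F k) = 0%E by rewrite F0 measure0.
have [k hk] := measure_nonincreasing_small mF dF mu0 e0.
by exists (t0 + k%:R); first by rewrite lerDl.
Qed.

Lemma cvg_measure_sandwich (A : (set T)^nat) (B : set T) :
  (forall j, measurable (A j)) -> measurable B ->
  (forall e : R, 0 < e -> exists L U N : set T,
    [/\ measurable L, measurable U & measurable N] /\
    [/\ L `<=` B, B `<=` U, (mu (U `\` L) < e%:E)%E, (mu N < e%:E)%E &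
        \forall j \near \oo, A j `<=` U `|` N /\ L `<=` A j `|` N]) ->
  mu \o A @ \oo --> mu B.
Proof.
move=> mA mB approx; rewrite -(fineK (fin_num_measure mu _ mB)).
apply: cvg_EFin; first by apply: nearW => j; exact: fin_num_measure.
apply/cvgrPdist_lt => e e0.
have [L [U [N [[mL mU mN] [LB BU UL Ne hj]]]]] := approx _ (divr_gt0 e0 (ltr0n _ 2)).
have mUL := measurableD mU mL.
have fine_lt X : measurable X -> (mu X < (e / 2)%:E)%E -> fine (mu X) < e / 2.
  by move=> mX; rewrite -lte_fin fineK// fin_num_measure.
have hU : U `<=` B `|` (U `\` L).
  by move=> x Ux; case: (pselect (L x)) => Lx; [left; exact: LB | right].
have hB : B `<=` L `|` (U `\` L).
  by move=> x Bx; case: (pselect (L x)) => Lx; [left | right; split => //; exact: BU].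
have h1 := fine_measure_le_setU mU mB mUL hU.
have h2 := fine_measure_le_setU mB mL mUL hB.
have h3 := fine_lt _ mUL UL; have h4 := fine_lt _ mN Ne.
apply: filterS hj => j [AU LA] /=.
have h5 := fine_measure_le_setU (mA j) mU mN AU.
have h6 := fine_measure_le_setU mL (mA j) mN LA.
rewrite ltr_norml; apply/andP; split; lra.
Qed.

End finite_measure_approximation.

Lemma integral_eq0_off2 (R : realType) (mu : {measure set (measurableTypeR R) -> \bar R})
    (f : measurableTypeR R -> \bar R) (a b : R) :
  mu [set a] = 0%E -> mu [set b] = 0%E -> (forall x, 0 <= f x)%E ->
  (forall x, x != a -> x != b -> f x = 0%E) -> (\int[mu]_x f x = 0)%E.
Proof.
move=> mua mub f0 fab.
have mf : measurable_fun setT f.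
  have -> : f = (fun x => f a * (\1_[set a] x)%:E + f b * (\1_([set b] `\ a) x)%:E)%E.
    apply/funext => x; rewrite !indicE.
    have [->|xa] := eqVneq x a.
      by rewrite mem_set// memNset ?mule1 ?mule0 ?adde0// => -[_]; apply.
    rewrite memNset ?mule0 ?add0e; last exact/eqP.
    have [xb|xb] := eqVneq x b.
      by subst x; rewrite mem_set ?mule1//; split => //= ba; rewrite ba eqxx in xa.
    by rewrite memNset ?mule0 ?fab// => -[/= /eqP]; rewrite (negbTE xb).
  by apply: emeasurable_funD; apply: emeasurable_funM => //;
    apply/measurable_EFinP; apply: measurable_indic => //; exact: measurableD.
have mab : measurable ([set a] `|` [set b] : set R) by exact: measurableU.
have mu_ab : mu ([set a] `|` [set b]) = 0%E by rewrite measureU0.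
rewrite (ge0_negligible_integral _ _ _ _ mu_ab)//; apply: integral0_eq => x [_].
by move=> /not_orP[/eqP xa /eqP xb]; exact: fab.
Qed.

Lemma normal_prob_set1 (R : realType) (a : R) : normal_prob (0:R) 1 [set a] = 0%E.
Proof.
have a0 : lebesgue_measure.-null_set ([set a] : set R).
  move=> A mA Aa; apply/eqP; rewrite eq_le measure_ge0 andbT.
  by rewrite -(lebesgue_measure_set1 a) le_measure// inE.
exact: (normal_prob_dominates 0 1 a0).
Qed.

Lemma integral_normal_prob_eq0_off2 (R : realType) (f : R -> \bar R) (a b : R) :
  (forall x, 0 <= f x)%E ->
  (forall x, x != a -> x != b -> f x = 0%E) -> (\int[normal_prob (0:R) 1]_x f x = 0)%E.
Proof. exact: integral_eq0_off2 (normal_prob_set1 a) (normal_prob_set1 b). Qed.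

Lemma lt_of_ne_xget_min d (T : orderType d) (x0 : T) (J : set T) x :
  J x -> x != xget x0 [set a | J a /\ forall y, J y -> (a <= y)%O] ->
  exists2 y, (y < x)%O & J y.
Proof.
move=> Jx; set M := [set a | _]; apply: contraNP => noy; apply/eqP.
have Mx : M x.
  by split => // y Jy; rewrite leNgt; apply/negP => yx; apply: noy; exists y.
have [Ja amin] : M (xget x0 M) by apply: xgetPex; exists x.
by apply/le_anti; rewrite (amin _ Jx) (Mx.2 _ Ja).
Qed.

Section gaussian_probability.
Variable R : realType.

Definition cons_pair m (p : measurableTypeR R * m.-tuple R) : m.+1.-tuple R :=
  [tuple of p.1 :: p.2].

Lemma measurable_cons_pair m : measurable_fun setT (@cons_pair m).
Proof. exact: measurable_cons. Qed.

HB.instance Definition _ m :=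
  isMeasurableFun.Build _ _ _ _ (@cons_pair m) (@measurable_cons_pair m).

Fixpoint gauss_prob m : probability (m.-tuple R) R :=
  match m with
  | 0 => Probability.clone _ _ _ (\d_([tuple] : 0.-tuple R)) _
  | m.+1 => Probability.clone _ _ _
      (distribution (normal_prob 0 1 \x gauss_prob m)%E (@cons_pair m)) _
  end.

Lemma gauss_probE m (A : set (m.-tuple R)) : gauss_prob m A = gauss_tuple A.
Proof.
elim: m A => [|m IH] A //=.
rewrite /distribution /pushforward /product_measure1; apply: eq_integral => x _ /=.
rewrite -IH; congr (gauss_prob m _).
by apply/seteqP; split => t /=; rewrite /xsection /= inE.
Qed.

Lemma gauss_tuple_ge0 m (A : set (m.-tuple R)) : (0 <= gauss_tuple A)%E.
Proof. by rewrite -gauss_probE measure_ge0. Qed.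

Lemma gauss_tuple_set0 m : gauss_tuple (set0 : set (m.-tuple R)) = 0%E.
Proof. by rewrite -gauss_probE measure0. Qed.

End gaussian_probability.

Section tuple_convexity.
Variable R : realType.

Definition tuple_convex m (S : set (m.-tuple R)) :=
  forall t t' u (l : R), S t -> S t' -> 0 <= l <= 1 ->
    (forall i, tnth u i = l * tnth t i + (1 - l) * tnth t' i) -> S u.

Definition tuple_interior m (S : set (m.-tuple R)) : set (m.-tuple R) :=
  [set z | exists2 r : R, 0 < r & forall u, (forall i, `|tnth u i - tnth z i| < r) -> S u].

Definition tuple_section m (S : set (m.+1.-tuple R)) (x : R) : set (m.-tuple R) :=
  [set t : m.-tuple R | S [tuple of x :: t]].

Lemma tuple_convex_section m (S : set (m.+1.-tuple R)) x :
  tuple_convex S -> tuple_convex (tuple_section S x).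
Proof.
move=> cS t t' u l St St' l01 hu; apply: (cS _ _ _ l St St' l01) => i.
by case: (unliftP ord0 i) => [j ->|->]; rewrite ?tnthS //=; ring.
Qed.

Lemma tuple_interior_section m (S : set (m.+1.-tuple R)) (x : R) (t : m.-tuple R) :
  tuple_interior S [tuple of x :: t] -> tuple_interior (tuple_section S x) t.
Proof.
move=> [r r0 hr]; exists r => // u hu; apply: hr => i.
by case: (unliftP ord0 i) => [j ->|->]; rewrite ?tnthS //= subrr normr0.
Qed.

Lemma exists_ub_ord m (f : 'I_m -> R) : exists2 M, 0 < M & forall i, f i <= M.
Proof.
exists (1 + \sum_i `|f i|) => [|i]; first by rewrite ltr_pwDl ?sumr_ge0.
rewrite (bigD1 i) //= addrCA; apply: le_trans (ler_norm _) _.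
by rewrite lerDl addr_ge0 ?sumr_ge0.
Qed.

Lemma dilation_bound (a b c th M r : R) :
  0 <= th <= 1 / 2 -> `|b - c| <= M -> `|a - c| < r / 4 -> th * M <= r / 4 ->
  `|(a - th * b) / (1 - th) - c| < r.
Proof.
move=> /andP[th0 th1] bM ar thM.
have th1' : 0 < 1 - th by lra.
have -> : (a - th * b) / (1 - th) - c = ((a - c) - th * (b - c)) / (1 - th).
  by field; rewrite gt_eqF.
rewrite normrM normfV (gtr0_norm th1') ltr_pdivrMr //.
have : `|th * (b - c)| <= th * M by rewrite normrM ger0_norm // ler_wpM2l.
have := ler_normB (a - c) (th * (b - c)).
have r0 : 0 < r by have := normr_ge0 (a - c); lra.
have : r / 2 <= r * (1 - th) by nra.
lra.
Qed.

Lemma tuple_convex_halfbox m (S : set (m.+1.-tuple R)) (x y r : R) (t s : m.-tuple R) :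
  tuple_convex S -> 0 < r ->
  (forall u, (forall i, `|tnth u i - tnth t i| < r) -> S [tuple of x :: u]) ->
  S [tuple of y :: s] -> x != y ->
  exists2 r', 0 < r' & forall w : m.+1.-tuple R,
    `|tnth w ord0 - x| < r' -> 0 <= (tnth w ord0 - x) * (y - x) ->
    (forall i, `|tnth w (lift ord0 i) - tnth t i| < r') -> S w.
Proof.
move=> cS r0 box Sy xy.
have yx0 : y - x != 0 by rewrite subr_eq0 eq_sym.
set D := `|y - x|; have D0 : 0 < D by rewrite normr_gt0.
have [M M0 hM] := exists_ub_ord (fun i => `|tnth s i - tnth t i|).
exists (minr (D / 2) (minr (r / 4) (r / 4 * (D / M)))) => [|w].
  have DM : 0 < D / M by exact: divr_gt0.
  by rewrite !lt_min; apply/and3P; split; [lra | lra | apply: mulr_gt0 DM; lra].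
rewrite !lt_min => /andP[w0D /andP[_ w0M]] sgn wt.
set th := (tnth w ord0 - x) / (y - x).
have th0 : 0 <= th.
  have -> : th = (tnth w ord0 - x) * (y - x) / (y - x) ^+ 2 by rewrite /th; field.
  by rewrite divr_ge0 ?sqr_ge0.
have thE : th = `|tnth w ord0 - x| / D by rewrite /D -normfV -normrM ger0_norm.
have th_half : th <= 1 / 2 by rewrite thE ler_pdivrMr //; lra.
have thM : th * M <= r / 4.
  rewrite thE mulrAC ler_pdivrMr //; apply: ltW.
  by rewrite -ltr_pdivlMr // -mulrA.
have th1 : 1 - th != 0 by apply: lt0r_neq0; lra.
(* w = th (y :: s) + (1 - th) (x :: p), with p in the box around t *)
pose p := [tuple (tnth w (lift ord0 i) - th * tnth s i) / (1 - th) | i < m].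
apply: (cS _ _ w th Sy (box p _)) => [i||i].
- rewrite tnth_mktuple; apply: dilation_bound; rewrite ?th0 //.
  by have := wt i; rewrite !lt_min => /and3P[].
- by rewrite th0 /=; lra.
- case: (unliftP ord0 i) => [j ->|->]; first by rewrite !tnthS tnth_mktuple; field.
  have -> : tnth w ord0 = th * (y - x) + x by rewrite divfK ?subrK.
  by rewrite [in RHS](tnth_nth 0) [in RHS](tnth_nth 0) /=; ring.
Qed.

Lemma tuple_interior_lift m (S : set (m.+1.-tuple R)) (x : R) (t : m.-tuple R) :
  tuple_convex S ->
  (exists2 x1, x1 < x & tuple_section S x1 !=set0) ->
  (exists2 x2, x < x2 & tuple_section S x2 !=set0) ->
  tuple_interior (tuple_section S x) t -> tuple_interior S [tuple of x :: t].
Proof.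
move=> cS [x1 x1x [t1 S1]] [x2 xx2 [t2 S2]] [r r0 box].
have [r1 r10 h1] := tuple_convex_halfbox cS r0 box S1 (negbT (gt_eqF x1x)).
have [r2 r20 h2] := tuple_convex_halfbox cS r0 box S2 (negbT (lt_eqF xx2)).
exists (minr r1 r2) => [|u hu]; first by rewrite lt_min r10 r20.
have := hu ord0; rewrite /= lt_min => /andP[u1 u2].
have hu' j : `|tnth u (lift ord0 j) - tnth t j| < minr r1 r2.
  by have := hu (lift ord0 j); rewrite tnthS.
have [sgn|sgn] := lerP 0 (tnth u ord0 - x).
- apply: h2 => // [|j]; first by apply: mulr_ge0 => //; rewrite subr_ge0 ltW.
  by have := hu' j; rewrite lt_min => /andP[].
- apply: h1 => // [|j]; first by apply: mulr_le0; [exact: ltW | rewrite subr_le0 ltW].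
  by have := hu' j; rewrite lt_min => /andP[].
Qed.

Lemma gauss_tuple_convex_boundary m (S : set (m.-tuple R)) :
  tuple_convex S -> gauss_tuple (S `\` tuple_interior S) = 0%E.
Proof.
elim: m S => [|m IH] S cS.
  rewrite (_ : _ `\` _ = set0) ?gauss_tuple_set0 //.
  apply/seteqP; split => // z [Sz]; apply; exists 1 => // u _.
  by rewrite (tuple0 u) -(tuple0 z).
pose J := [set x | tuple_section S x !=set0].
apply: (@integral_normal_prob_eq0_off2 _ _
  (xget 0 [set a | J a /\ forall y, J y -> a <= y])
  (xget 0 [set b | J b /\ forall y, J y -> y <= b])) => [x|x xa xb].
  exact: gauss_tuple_ge0.
change (gauss_tuple (tuple_section (S `\` tuple_interior S) x) = 0%E).
have [Jx|nJx] := pselect (J x); last first.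
  rewrite (_ : tuple_section _ x = set0) ?gauss_tuple_set0 //.
  by apply/seteqP; split => // t [St _]; apply: nJx; exists t.
have [x1 x1x Jx1] := lt_of_ne_xget_min Jx xa.
(* in the dual order [R^d] the maximum of J is a minimum *)
have [x2 xx2 Jx2] := @lt_of_ne_xget_min _ R^d 0 J x Jx xb.
rewrite (_ : tuple_section _ x = tuple_section S x `\` tuple_interior (tuple_section S x)).
  by rewrite IH //; exact: tuple_convex_section.
apply/seteqP; split => t [St nI]; split => // It; apply: nI.
  by apply: tuple_interior_lift => //; [exists x1 | exists x2].
exact: tuple_interior_section.
Qed.

End tuple_convexity.

Section row_of_tuple.
Variables (R : realType) (n : nat).

Definition rowt (t : n.-tuple R) : 'rV[R]_n := \row_i tnth t i.

Lemma rowtE t i : rowt t ord0 i = tnth t i.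
Proof. by rewrite mxE. Qed.

Definition rat_box (kq : nat * n.-tuple rat) : set (n.-tuple R) :=
  [set u | forall i, ball (ratr (tnth kq.2 i) : R) (kq.1.+1%:R)^-1 (tnth u i)].

Lemma measurable_rat_box kq : measurable (rat_box kq).
Proof.
rewrite (_ : rat_box kq = \bigcap_(i in [set: 'I_n])
    ((fun u => tnth u i) @^-1` ball (ratr (tnth kq.2 i) : R) (kq.1.+1%:R)^-1)).
  apply: fin_bigcap_measurable => // i _; rewrite -[X in measurable X]setTI.
  exact: (measurable_tnth i measurableT (measurable_ball _ _)).
by apply/seteqP; split => u /= h i => [_|]; apply: h.
Qed.

Lemma rat_box_nbhs (A : set 'rV[R]_n) t : open A -> A (rowt t) ->
  exists kq, rat_box kq t /\ rat_box kq `<=` rowt @^-1` A.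
Proof.
move=> oA At; have /nbhs_ballP[e /= e0 eA] := oA _ At.
set k := truncn (2 / e); set c : R := k.+1%:R^-1.
have ce : c < e / 2 by rewrite /c invf_plt ?posrE ?divr_gt0 // invf_div truncnS_gt.
have hq i : exists q : rat, ball (ratr q : R) c (tnth t i).
  have [|q] := @rat_in_itvoo R (tnth t i - c) (tnth t i + c).
    by rewrite ltrBlDr -addrA ltrDl addr_gt0 ?invr_gt0.
  rewrite in_itv /= => /andP[? ?]; exists q.
  by rewrite /ball /= ltr_norml; apply/andP; split; lra.
have [q {}hq] := choice hq.
exists (k, [tuple q i | i < n]); split => [i|u Bu]; first by rewrite tnth_mktuple.
apply: eA; split => // i j; rewrite (ord1 i) !rowtE.
have := Bu j; have := hq j; rewrite /ball /= tnth_mktuple -/c => h1 h2.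
have := ler_distD (ratr (q j)) (tnth t j) (tnth u j).
by rewrite (distrC (tnth t j) (ratr (q j))); lra.
Qed.

Lemma measurable_rowt_open (A : set 'rV[R]_n) : open A -> measurable (rowt @^-1` A).
Proof.
move=> oA; pose G kq := if pselect (rat_box kq `<=` rowt @^-1` A) is left _
  then rat_box kq else set0.
rewrite (_ : rowt @^-1` A = \bigcup_kq G kq).
  apply: countable_bigcupT_measurable => [|kq]; first exact: countableP.
  by rewrite /G; case: pselect => _ //; exact: measurable_rat_box.
apply/seteqP; split => [t At|t [kq _]].
  have [kq [Bt BA]] := rat_box_nbhs oA At.
  by exists kq => //; rewrite /G; case: pselect.
by rewrite /G; case: pselect => [kqA /kqA|_ []].
Qed.

Lemma measurable_rowt_closed (A : set 'rV[R]_n) : closed A -> measurable (rowt @^-1` A).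
Proof.
move=> cA; have -> : rowt @^-1` A = ~` (rowt @^-1` (~` A)) by rewrite -preimage_setC setCK.
by apply: measurableC; exact: (measurable_rowt_open (closed_openC cA)).
Qed.

Lemma measurable_dotv_rowt (v : 'rV[R]_n) : measurable_fun setT (fun t => dotv (rowt t) v).
Proof.
rewrite /dotv; under eq_fun do under eq_bigr do rewrite rowtE.
apply: measurable_sum => i; apply: measurable_funM => //; exact: measurable_tnth.
Qed.

(* [all_analysis] also exports a [convex_set], hence the qualified name *)
Lemma tuple_convex_rowt (K : set 'rV[R]_n) :
  Defs.convex_set K -> tuple_convex (rowt @^-1` K).
Proof.
move=> cK a b u l Ka Kb l01 hu; rewrite /preimage /=.
have -> : rowt u = l *: rowt a + (1 - l) *: rowt b by apply/rowP => i; rewrite !mxE hu.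
exact: cK.
Qed.

End row_of_tuple.

Arguments rowt {R n}.

Section dotv_theory.
Variables (R : realType) (n : nat).
Local Notation vec := 'rV[R]_n.

Lemma dotvC (x y : vec) : dotv x y = dotv y x.
Proof. by apply: eq_bigr => i _; rewrite mulrC. Qed.

Lemma dotvDl (x y z : vec) : dotv (x + y) z = dotv x z + dotv y z.
Proof. by rewrite /dotv -big_split; apply: eq_bigr => i _; rewrite mxE mulrDl. Qed.

Lemma dotvZl a (x z : vec) : dotv (a *: x) z = a * dotv x z.
Proof. by rewrite /dotv mulr_sumr; apply: eq_bigr => i _; rewrite mxE mulrA. Qed.

Lemma dotvNl (x z : vec) : dotv (- x) z = - dotv x z.
Proof. by rewrite -scaleN1r dotvZl mulN1r. Qed.

Lemma dotvv_ge0 (x : vec) : 0 <= dotv x x.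
Proof. by apply: sumr_ge0 => i _; rewrite -expr2 sqr_ge0. Qed.

Lemma enorm_ge0 (x : vec) : 0 <= enorm x.
Proof. exact: sqrtr_ge0. Qed.

Lemma enormN (x : vec) : enorm (- x) = enorm x.
Proof. by rewrite /enorm dotvNl dotvC dotvNl opprK. Qed.

Lemma norm_coord_le_enorm (x : vec) i : `|x ord0 i| <= enorm x.
Proof.
rewrite /enorm -sqrtr_sqr ler_sqrt ?dotvv_ge0 // /dotv (bigD1 i) //= expr2 lerDl.
by apply: sumr_ge0 => j _; rewrite -expr2 sqr_ge0.
Qed.

End dotv_theory.

Section pseudo_cones.
Variables (R : realType) (n : nat).
Local Notation vec := 'rV[R]_n.

Lemma hausdorff_distC (A B : set vec) : hausdorff_dist A B = hausdorff_dist B A.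
Proof.
rewrite /hausdorff_dist; congr (ereal_inf [set _%:E | _ in _]).
have swap (X Y : set vec) e :
    (forall y, Y y -> exists2 x, X x & enorm (x - y) <= e) <->
    (forall y, Y y -> exists2 x, X x & enorm (y - x) <= e).
  by split => h y /h[x Xx xy]; exists x; rewrite // -enormN opprB.
by apply/seteqP; split => e [e0 [XY YX]]; do 2 split => //; apply/swap.
Qed.

Lemma pseudo_cone_recession (K : set vec) : pseudo_cone K -> K `<=` recession_cone K.
Proof.
case=> _ cK cvK _ scK x Kx y Ky.
have hK k : K (k.+1%:R^-1 *: (k.+1%:R *: x) + (1 - k.+1%:R^-1) *: y).
  apply: cvK => //; first by apply: scK => //; rewrite ler1n.
  by rewrite invr_ge0 ler0n invf_le1 ?ler1n.
apply: (@closed_cvg nat _ \oo _ (fun k => (1 - harmonic k) *: y + x) K cK).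
  by apply: nearW => k; move: (hK k); rewrite scalerA mulVf // scale1r addrC.
have -> : y + x = (1 - 0) *: y + x by rewrite subr0 scale1r.
apply: cvgD; last exact: cvg_cst.
by apply: cvgZr_tmp; apply: cvgB; [exact: cvg_cst | exact: cvg_harmonic].
Qed.

Lemma C_pseudo_cone_sub (C K : set vec) : C_pseudo_cone C K -> K `<=` C.
Proof. by case=> pK <-; exact: pseudo_cone_recession. Qed.

Lemma C_pseudo_cone_addr (C K : set vec) :
  C_pseudo_cone C K -> forall a c, K a -> C c -> K (a + c).
Proof. by case=> _ <- a c Ka /(_ a Ka). Qed.

Lemma closed_harmonic_shift_mem (A : set vec) (z w : vec) :
  closed A -> (forall k, A (z + harmonic k *: w)) -> A z.
Proof.
move=> cA hA; apply: (@closed_cvg nat _ \oo _ (fun k => z + harmonic k *: w) A cA).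
  exact: nearW.
have {2}-> : z = z + 0 *: w by rewrite scale0r addr0.
by apply: cvgD; [exact: cvg_cst | apply: cvgZr_tmp; exact: cvg_harmonic].
Qed.

Lemma interior_coord_ball (C : set vec) v : interior C v ->
  exists2 rho : R, 0 < rho & forall u : vec, (forall i, `|v ord0 i - u ord0 i| < rho) -> C u.
Proof.
move=> /nbhs_ballP[rho rho0 hb]; exists rho => // u hu.
by apply: hb; split => // i j; rewrite (ord1 i); exact: hu.
Qed.

Definition shift_set (K : set vec) (w : vec) : set vec := [set z | K (z + w)].

Definition halfspace_gt (v : vec) (t : R) : set vec := [set z | t < dotv z v].

Lemma closed_shift_set (K : set vec) w : closed K -> closed (shift_set K w).
Proof.
move=> cK; change (closed ((fun z => z + w) @^-1` K)).
apply: preimage_closed cK => z _.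
exact: (cvgD cvg_id (cvg_cst w)).
Qed.

End pseudo_cones.

Lemma harmonic_lt (R : realType) (e : R) : 0 < e -> exists k, harmonic k < e.
Proof. by move=> e0; exists (truncn e^-1); rewrite /= invf_plt ?posrE // truncnS_gt. Qed.

Section shifts_along_interior_direction.
Variables (R : realType) (n : nat) (C : set 'rV[R]_n) (v : 'rV[R]_n) (rho : R).
Local Notation vec := 'rV[R]_n.
Hypothesis C_cone : forall x l, C x -> 0 <= l -> C (l *: x).
Hypothesis rho_gt0 : 0 < rho.
Hypothesis v_ball : forall u : vec, (forall i, `|v ord0 i - u ord0 i| < rho) -> C u.

Lemma v_in_C : C v.
Proof. by apply: v_ball => i; rewrite subrr normr0. Qed.

Section recession_stable.
Context {K : set vec} (KC : forall a c, K a -> C c -> K (a + c)).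

Lemma shift_set_le (s s' : R) :
  s <= s' -> shift_set K (s *: v) `<=` shift_set K (s' *: v).
Proof.
move=> ss' z Kz; rewrite /shift_set /= (_ : z + s' *: v = (z + s *: v) + (s' - s) *: v).
  by apply: KC Kz _; apply: C_cone v_in_C _; rewrite subr_ge0.
by rewrite scalerBl addrA (addrAC z) addrK.
Qed.

Lemma shift_set_sandwich (s : R) : 0 <= s ->
  shift_set K ((- s) *: v) `<=` K /\ K `<=` shift_set K (s *: v).
Proof.
move=> s0; have K0 z : shift_set K (0 *: v) z = K z by rewrite /shift_set /= scale0r addr0.
have ns : - s <= 0 by rewrite oppr_le0.
split => z Kz; first by rewrite -K0; exact: (shift_set_le ns).
by apply: (shift_set_le s0); rewrite K0.
Qed.

Lemma add_shift_mem (y z : vec) (s : R) : 0 < s -> K y ->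
  (forall i, `|z ord0 i - y ord0 i| < s * rho) -> K (z + s *: v).
Proof.
move=> s0 Ky zy; have -> : z + s *: v = y + s *: (v + s^-1 *: (z - y)).
  by rewrite scalerDr scalerA divff ?gt_eqF // scale1r addrCA subrKC addrC.
apply: KC Ky _; apply: C_cone (ltW s0); apply: v_ball => i.
by rewrite !mxE opprD addNKr normrN normrM ger0_norm ?invr_ge0 ?ltW // ltr_pdivrMl.
Qed.

Lemma add_shift_mem_enorm (y z : vec) (s : R) :
  0 < s -> K y -> enorm (z - y) < s * rho -> K (z + s *: v).
Proof.
move=> s0 Ky zy; apply: add_shift_mem s0 Ky _ => i.
by apply: le_lt_trans zy; have := norm_coord_le_enorm (z - y) i; rewrite !mxE.
Qed.

Lemma shift_gap_bigcap : closed K ->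
  \bigcap_k rowt @^-1` (shift_set K (harmonic k *: v) `\` shift_set K ((- harmonic k) *: v))
  = rowt @^-1` K `\` tuple_interior (rowt @^-1` K).
Proof.
move=> cK; apply/seteqP; split => u.
- move=> hu; split.
    by apply: (closed_harmonic_shift_mem (w := v) cK) => k; have [] := hu k I.
  move=> [r r0 hr]; have ev : 0 < enorm v + 1 by have := enorm_ge0 v; lra.
  have [k hk] := harmonic_lt (divr_gt0 r0 ev).
  have [_] := hu k I; apply; rewrite /shift_set /=.
  have -> : rowt u + (- harmonic k) *: v =
      rowt [tuple tnth u i - harmonic k * v ord0 i | i < n].
    by apply/rowP => i; rewrite !mxE tnth_mktuple mulNr.
  apply: hr => i; rewrite tnth_mktuple addrAC subrr add0r normrN normrM.
  rewrite ger0_norm ?harmonic_ge0 //.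
  have := norm_coord_le_enorm v i; have := harmonic_gt0 k (R := R).
  by move: hk; rewrite ltr_pdivlMr //; nra.
- move=> [Ku nI] k _; split.
    by apply: KC Ku _; apply: C_cone v_in_C _; exact: harmonic_ge0.
  move=> Ku'; apply: nI; exists (harmonic k * rho) => [|u' hu'].
    by rewrite mulr_gt0 ?harmonic_gt0.
  have := add_shift_mem (z := rowt u' + (- harmonic k) *: v) (harmonic_gt0 k) Ku'.
  rewrite scaleNr subrK; apply => i; rewrite !mxE.
  by rewrite (_ : _ - _ - _ = tnth u' i - tnth u i) ?hu' //; ring.
Qed.

End recession_stable.

Lemma hausdorff_lt_shift_sub (A B : set vec) s t :
  C_pseudo_cone C A -> C_pseudo_cone C B -> 0 < s ->
  (hausdorff_dist (Kminus C A v t) (Kminus C B v t) < (s * rho)%:E)%E ->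
  A `<=` shift_set B (s *: v) `|` halfspace_gt v t.
Proof.
move=> cA cB s0 /ereal_inf_lt[_ [e [_ [AB _]] <-]]; rewrite lte_fin => es a Aa.
have [av|] := lerP (dotv a v) t; last by right.
have [b [Bb _] ab] := AB a (conj Aa (conj (C_pseudo_cone_sub cA Aa) av)).
by left; exact: (add_shift_mem_enorm (C_pseudo_cone_addr cB) s0 Bb (le_lt_trans ab es)).
Qed.

Lemma hausdorff_lt_shift_sup (A B : set vec) s t :
  C_pseudo_cone C A -> C_pseudo_cone C B -> 0 < s ->
  (hausdorff_dist (Kminus C A v t) (Kminus C B v t) < (s * rho)%:E)%E ->
  shift_set B ((- s) *: v) `<=` A `|` halfspace_gt v t.
Proof.
rewrite hausdorff_distC => cA cB s0 AB u Bu.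
case: (hausdorff_lt_shift_sub cB cA s0 AB Bu) => [|Hu].
  by rewrite /shift_set /= scaleNr subrK; left.
right; apply: lt_le_trans Hu _; rewrite dotvDl dotvZl gerDl mulNr oppr_le0.
by rewrite mulr_ge0 ?dotvv_ge0 // ltW.
Qed.

Lemma gauss_shift_gap_small (K : set vec) : C_pseudo_cone C K ->
  forall e : R, 0 < e -> exists2 s, 0 < s &
    (gauss_prob R n (rowt @^-1` (shift_set K (s *: v) `\` shift_set K ((- s) *: v))) < e%:E)%E.
Proof.
move=> cK e e0; have [[_ clK cvK _ _] _] := cK; have KC := C_pseudo_cone_addr cK.
pose F k := rowt @^-1` (shift_set K (harmonic k *: v) `\` shift_set K ((- harmonic k) *: v)).
have mF k : measurable (F k).
  by apply: measurableD; apply: measurable_rowt_closed; exact: closed_shift_set.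
have hdecr k : harmonic k.+1 <= harmonic k :> R by rewrite /= lef_pV2 ?posrE // ler_nat.
have dF k : F k.+1 `<=` F k.
  move=> u [up dn]; split; first exact: (shift_set_le KC (hdecr k) up).
  by move=> dk; apply: dn; apply: (shift_set_le KC _ dk); rewrite lerN2.
have F0 : gauss_prob R n (\bigcap_k F k) = 0%E.
  rewrite shift_gap_bigcap // gauss_probE gauss_tuple_convex_boundary //.
  exact: tuple_convex_rowt.
have [k hk] := measure_nonincreasing_small mF dF F0 e0.
by exists (harmonic k) => //; exact: harmonic_gt0.
Qed.

End shifts_along_interior_direction.

Unset Implicit Arguments. Set Strict Implicit. Set Printing Implicit Defensive.

Theorem lemma3p8 (R : realType) (n : nat) (C : set 'rV[R]_n) (v : 'rV[R]_n)
  (Kj : nat -> set 'rV[R]_n) (K : set 'rV[R]_n) :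
  closed_convex_cone C -> pointed C -> full_dim C ->
  enorm v = 1 -> interior C v -> interior [set x | polar C (- x)] v ->
  (forall j, C_pseudo_cone C (Kj j)) -> C_pseudo_cone C K ->
  pc_cvg C v Kj K ->
  (fun j => gaussian (Kj j)) @ \oo --> gaussian K.
Proof.
move=> [_ _ _ C_cone] _ _ _ /interior_coord_ball[rho rho0 v_ball] _ cKj cK [t0 _ [_ cvgK]].
have meas X : C_pseudo_cone C X -> measurable (rowt @^-1` X).
  by case=> -[_ clX _ _ _] _; exact: measurable_rowt_closed.
have gaussianE X : gaussian X = gauss_prob R n (rowt @^-1` X) by rewrite gauss_probE.
rewrite gaussianE (funext (fun j => gaussianE (Kj j))).
apply: (cvg_measure_sandwich (A := fun j => rowt @^-1` Kj j)) => [j||e e0]; try exact: meas.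
have [t t0t Ht] := measure_tail_small (gauss_prob R n) (measurable_dotv_rowt v) t0 e0.
have [s s0 Hs] := gauss_shift_gap_small C_cone rho0 v_ball cK e0.
have [KsK KKs] := shift_set_sandwich C_cone rho0 v_ball (C_pseudo_cone_addr cK) (ltW s0).
exists (rowt @^-1` shift_set K ((- s) *: v)), (rowt @^-1` shift_set K (s *: v)),
  (rowt @^-1` halfspace_gt v t).
split; first by split; [..| exact: measurable_set_gt (measurable_dotv_rowt v)];
  apply: measurable_rowt_closed; apply: closed_shift_set; case: cK => -[].
split => [u /KsK // | u /KKs // | // | // |].
have Hsmall := cvgK t t0t _ (nbhs_open_ereal_lt (f := fun=> s * rho) (mulr_gt0 s0 rho0)).
near=> j.
have hj : (hausdorff_dist (Kminus C (Kj j) v t) (Kminus C K v t) < (s * rho)%:E)%E.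
  by near: j; exact: Hsmall.
split => u; [exact: (hausdorff_lt_shift_sub C_cone v_ball (cKj j) cK s0 hj) |
             exact: (hausdorff_lt_shift_sup C_cone v_ball (cKj j) cK s0 hj)].
Unshelve. all: by end_near.
Qed.
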